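(* Let $m\ge1$, $N=2^m$, let $\mathcal{A}\subseteq[0,N-1]$ be nonempty and $\mathbf{P}\in\mathbb{F}_2^{N\times N}$ upper triangular with unit diagonal. Then $\mathcal{C}_{\mathbf{P}\boldsymbol{G}_N}(\mathcal{A})\subset\mathcal{C}_{\boldsymbol{G}_N}([\min(\mathcal{A}),N-1])$.
   Context: $[\ell,u]=\{\ell,\dots,u\}$. $\boldsymbol{G}_N=\begin{pmatrix}1&0\\1&1\end{pmatrix}^{\otimes m}$ over $\mathbb{F}_2$, rows/columns indexed by $0,\dots,N-1$; $\mathcal{C}_{\mathbf{B}}(\mathcal{S})$ is the code spanned by the rows of $\mathbf{B}$ indexed by $\mathcal{S}$. *)

From mathcomp Require Import all_boot all_algebra.
From mathcomp Require Import mxtens.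
Set Implicit Arguments. Unset Strict Implicit. Unset Printing Implicit Defensive.
Import GRing.Theory.
Local Open Scope ring_scope.

Definition Fker : 'M['F_2]_2 := \matrix_(i < 2, j < 2) (if (j <= i)%N then 1 else 0).

(* G_N = F^{(x) m}, N = 2^m, standard Kronecker power (row index i1*2^(m-1)+i2) *)
Definition GN (m : nat) : 'M['F_2]_(2 ^ m) := ntensmx Fker m.

Definition code {N : nat} (B : 'M['F_2]_N) (S : {set 'I_N}) : 'M['F_2]_N :=
  (\sum_(i in S) <<row i B>>)%MS.

Definition upper_unitriangular {N : nat} (P : 'M['F_2]_N) : Prop :=
  (forall i j : 'I_N, (j < i)%N -> P i j = 0) /\ (forall i : 'I_N, P i i = 1).

From mathcomp Require Import all_boot all_algebra.
From mathcomp Require Import mxtens.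
Import GRing.Theory.
Local Open Scope ring_scope.

(* Row i of P B is the combination sum_j P i j (row j B), and P i j = 0 for
   j < i.  So every generator of the left-hand code is spanned by rows j >= i
   >= min A of B.  Neither the Kronecker structure of G_N, nor m >= 1, nor the
   unit diagonal of P plays any role. *)

Section RowSupport.

Variables (F : fieldType) (m n : nat).

Lemma row_mul_sub_support (P : 'M[F]_m) (B : 'M[F]_(m, n)) (i : 'I_m)
    (S : {set 'I_m}) :
  (forall j, P i j != 0 -> j \in S) ->
  (row i (P *m B) <= \sum_(j in S) <<row j B>>)%MS.
Proof.
move=> suppS; rewrite row_mul mulmx_sum_row; apply/summx_sub => j _.
rewrite mxE; have [jS | jNS] := boolP (j \in S).
  by apply/scalemx_sub/(sumsmx_sup j jS); rewrite genmxE.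
have /eqP -> : P i j == 0 by apply: contraNT jNS; apply: suppS.
by rewrite scale0r sub0mx.
Qed.

End RowSupport.

Theorem lemma1 (m : nat) (hm : (1 <= m)%N) (A : {set 'I_(2 ^ m)})
  (a0 : 'I_(2 ^ m)) (ha0 : a0 \in A) (hmin : forall a, a \in A -> (a0 <= a)%N)
  (P : 'M['F_2]_(2 ^ m)) (hP : upper_unitriangular P) :
  (code (P *m GN m) A <= code (GN m) [set i : 'I_(2 ^ m) | (a0 <= i)%N])%MS.
Proof.
apply/sumsmx_subP => i iA; rewrite genmxE.
apply: row_mul_sub_support => j Pij_neq0; rewrite inE.
apply: leq_trans (hmin i iA) _; rewrite leqNgt.
by apply: contra Pij_neq0 => /(proj1 hP i j) ->.
Qed.
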